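(* Let $\Lambda$ be a locally-convex, row-finite $k$-graph and $R$ a commutative ring with $1$. Let $I$ be a basic graded ideal of $KP_R(\Lambda)$. Let $(q,t)$ be the universal Kumjian–Pask family of $KP_R(\Lambda\setminus H(I))$ and $(p,m)$ that of $KP_R(\Lambda)$. Then $\Lambda\setminus H(I)$ is a locally-convex row-finite $k$-graph, and there is an $R$-algebra isomorphism $\pi: KP_R(\Lambda\setminus H(I))\to KP_R(\Lambda)/I$ such that \[\pi(q_v)=p_v+I,\qquad \pi(t_\lambda)=m_\lambda+I,\qquad \pi(t_{\mu^*})=m_{\mu^*}+I\] for all $v\in\Lambda^0\setminus H(I)$ and all non-vertex paths $\lambda,\mu$ of $\Lambda\setminus H(I)$.
   Context: A $k$-graph $(\Lambda,d)$ is a countable category $\Lambda$ with a functor $d:\Lambda\to\mathbb{N}^k$ (the degree) satisfying unique factorization: whenever $d(\lambda)=m+n$ there are unique $\mu,\nu\in\Lambda$ with $d(\mu)=m$, $d(\nu)=n$, $\lambda=\mu\nu$. Morphisms are called paths; objects are identified with the paths of degree $0$ and called vertices, forming $\Lambda^0$. $r,s$ are the range and source (codomain and domain) maps; $\lambda\mu$ is defined when $s(\lambda)=r(\mu)$. $\mathbb{N}^k$ is ordered coordinatewise, $e_i$ are the standard generators, $\Lambda^m=d^{-1}(m)$, and for $v\in\Lambda^0$, $E\subseteq\Lambda$: $vE=\{\lambda\in E: r(\lambda)=v\}$, $Ev=\{\lambda\in E:s(\lambda)=v\}$. $\Lambda$ is row-finite if $v\Lambda^m$ is finite for all $v,m$.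 $\Lambda^{\le n}=\{\lambda: d(\lambda)\le n,\ \text{and } d(\lambda)_i<n_i \Rightarrow s(\lambda)\Lambda^{e_i}=\emptyset\}$. $\Lambda$ is locally-convex if for all $v\in\Lambda^0$, $i\ne j$, $\lambda\in v\Lambda^{e_i}$, $\mu\in v\Lambda^{e_j}$, the sets $s(\lambda)\Lambda^{e_j}$ and $s(\mu)\Lambda^{e_i}$ are nonempty. A set $H\subseteq\Lambda^0$ is hereditary if $r(\lambda)\in H$ implies $s(\lambda)\in H$, and saturated if $s(v\Lambda^{\le e_i})\subseteq H$ for some $i$ implies $v\in H$. For $H\subseteq \Lambda^0$, $\Lambda\setminus H$ denotes the subcategory with objects $\Lambda^0\setminus H$ and morphisms $\{\lambda: r(\lambda),s(\lambda)\notin H\}$, with the restricted degree map. Kumjian–Pask algebras: $R$ is a commutative ring with $1$. Ghost paths are formal symbols $\lambda^*$ ($\lambda\in\Lambda$), with $v^*=v$ for vertices, $r(\lambda^* )=s(\lambda)$, $s(\lambda^* )=r(\lambda)$, $(\mu\lambda)^*=\lambda^*\mu^*$. A Kumjian–Pask $\Lambda$-family $(P,S)$ in an $R$-algebra consists of $P:\Lambda^0\to A$ and $S$ defined on non-vertex paths and non-vertex ghost paths such that: (KP1) the $P_v$ are mutually orthogonal idempotents; (KP2) $S_\lambda S_\mu=S_{\lambda\mu}$, $S_{\mu^*}S_{\lambda^*}=S_{(\lambda\mu)^*}$, $P_{r(\lambda)}S_\lambda=S_\lambda=S_\lambda P_{s(\lambda)}$, $P_{s(\lambda)}S_{\lambda^*}=S_{\lambda^*}=S_{\lambda^*}P_{r(\lambda)}$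 whenever $r(\mu)=s(\lambda)$; (KP3) $S_{\lambda^*}S_\mu=\delta_{\lambda,\mu}P_{s(\lambda)}$ for $n\in\mathbb{N}^k\setminus\{0\}$, $\lambda,\mu\in\Lambda^{\le n}$; (KP4) $P_v=\sum_{\lambda\in v\Lambda^{\le n}}S_\lambda S_{\lambda^*}$ for all $v$ and $n\ne0$. $KP_R(\Lambda)$ is the universal $R$-algebra generated by a Kumjian–Pask $\Lambda$-family $(p,s)$ (with $s_v:=p_v$); it equals $\mathrm{span}_R\{s_\alpha s_{\beta^*}: s(\alpha)=s(\beta)\}$ and is $\mathbb{Z}^k$-graded by $KP_R(\Lambda)_n=\mathrm{span}\{s_\alpha s_{\beta^*}: d(\alpha)-d(\beta)=n\}$. An ideal $I$ is graded if $\{I\cap KP_R(\Lambda)_n\}$ is a grading of $I$ (the homogeneous components of each element of $I$ lie in $I$). An ideal $I$ is basic if $rp_v\in I$ with $r\in R\setminus\{0\}$ implies $p_v\in I$. For an ideal $I$, $H(I)=\{v\in\Lambda^0: p_v\in I\}$. *)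

From HB Require Import structures.
From mathcomp Require Import all_boot all_order all_algebra.
From Stdlib Require List.

Set Implicit Arguments.
Unset Strict Implicit.
Unset Printing Implicit Defensive.

Import GRing.Theory.
Local Open Scope ring_scope.

Definition Nk (k : nat) := {ffun 'I_k -> nat}.
Definition Zk (k : nat) := {ffun 'I_k -> int}.

Definition nk0 (k : nat) : Nk k := [ffun => 0%N].
Definition nkadd (k : nat) (m n : Nk k) : Nk k := [ffun i => (m i + n i)%N].
Definition nke (k : nat) (i : 'I_k) : Nk k := [ffun j => nat_of_bool (j == i)].
Definition nkle (k : nat) (m n : Nk k) : bool := [forall i, (m i <= n i)%N].

(* Composition is the (partial) operation of the category, encoded    *)
(* as its graph: [kg_comp l m n] means  n = l m  (defined only when   *)
(* s(l) = r(m)).  Objects (vertices) form their own type; a vertex v  *)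
(* is identified with its identity morphism, the path of degree 0     *)
(* with range and source v.                                           *)

Record kgraph_data (k : nat) := KGraphData {
  kg_vert : Type;
  kg_path : Type;
  kg_r : kg_path -> kg_vert;
  kg_s : kg_path -> kg_vert;
  kg_comp : kg_path -> kg_path -> kg_path -> Prop;
  kg_deg : kg_path -> Nk k
}.
Arguments kg_r {k} g _ : rename.
Arguments kg_s {k} g _ : rename.
Arguments kg_comp {k} g _ _ _ : rename.
Arguments kg_deg {k} g _ : rename.

Section KGraph.
Variables (k : nat) (G : kgraph_data k).
Local Notation V := (kg_vert G).
Local Notation P := (kg_path G).
Local Notation r := (kg_r G).
Local Notation s := (kg_s G).
Local Notation comp := (kg_comp G).
Local Notation d := (kg_deg G).

Definition is_kgraph : Prop :=
  (exists f : P -> nat, injective f) /\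
  (exists g : V -> nat, injective g) /\
  (forall l m n, comp l m n -> [/\ s l = r m, r n = r l & s n = s m]) /\
  (forall l m, s l = r m -> exists n, comp l m n) /\
  (forall l m n n', comp l m n -> comp l m n' -> n = n') /\
  (forall l m n lm mn x, comp l m lm -> comp m n mn -> comp lm n x ->
      comp l mn x) /\
  (forall v, exists e, [/\ r e = v, s e = v, d e = nk0 k,
      (forall l, r l = v -> comp e l l) & (forall l, s l = v -> comp l e l)]) /\
  (forall l m n, comp l m n -> d n = nkadd (d l) (d m)) /\
  (forall l (a b : Nk k), d l = nkadd a b ->
     exists mu nu, [/\ comp mu nu l, d mu = a, d nu = b &
       forall mu' nu', comp mu' nu' l -> d mu' = a -> d nu' = b ->
         mu' = mu /\ nu' = nu]).

Definition row_finite : Prop :=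
  forall (v : V) (m : Nk k), exists sq : seq P,
    forall l, r l = v -> d l = m -> List.In l sq.

Definition le_n (n : Nk k) (l : P) : Prop :=
  nkle (d l) n /\
  forall i : 'I_k, (d l i < n i)%N ->
    ~ (exists e, r e = s l /\ d e = nke i).

Definition locally_convex : Prop :=
  forall (v : V) (i j : 'I_k), i != j ->
  forall l mu, r l = v -> d l = nke i -> r mu = v -> d mu = nke j ->
    (exists a, r a = s l /\ d a = nke j) /\
    (exists b, r b = s mu /\ d b = nke i).

End KGraph.

Section Remove.
Variables (k : nat) (G : kgraph_data k) (H : kg_vert G -> Prop).

Definition rm_vert := {v : kg_vert G | ~ H v}.
Definition rm_path :=
  {l : kg_path G | ~ H (kg_r G l) /\ ~ H (kg_s G l)}.
Definition rm_r (l : rm_path) : rm_vert :=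
  exist _ (kg_r G (proj1_sig l)) (proj1 (proj2_sig l)).
Definition rm_s (l : rm_path) : rm_vert :=
  exist _ (kg_s G (proj1_sig l)) (proj2 (proj2_sig l)).
Definition rm_comp (l m n : rm_path) : Prop :=
  kg_comp G (proj1_sig l) (proj1_sig m) (proj1_sig n).
Definition rm_deg (l : rm_path) : Nk k := kg_deg G (proj1_sig l).

Definition kg_remove : kgraph_data k :=
  @KGraphData k rm_vert rm_path rm_r rm_s rm_comp rm_deg.
End Remove.

Record nalg (R : comPzRingType) := NAlg {
  na_car :> lmodType R;
  na_mul : na_car -> na_car -> na_car;
  na_mulA : forall x y z, na_mul x (na_mul y z) = na_mul (na_mul x y) z;
  na_mulDl : forall x y z, na_mul (x + y) z = na_mul x z + na_mul y z;
  na_mulDr : forall x y z, na_mul x (y + z) = na_mul x y + na_mul x z;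
  na_mulZl : forall (a : R) x y, na_mul (a *: x) y = a *: na_mul x y;
  na_mulZr : forall (a : R) x y, na_mul x (a *: y) = a *: na_mul x y
}.
Arguments na_mul {R} A x y : rename.

Definition is_alg_hom (R : comPzRingType) (A B : nalg R) (f : A -> B) : Prop :=
  (forall x y, f (x + y) = f x + f y) /\
  (forall (a : R) x, f (a *: x) = a *: f x) /\
  (forall x y, f (na_mul A x y) = na_mul B (f x) (f y)).

(* Kumjian--Pask families.  [kS] is the family on paths, [kSg] on      *)
(* ghost paths; on vertices (degree-0 paths e) they are required to    *)
(* agree with [kP] (convention s_v := p_v, v^* = v).                   *)

Record kpfam (k : nat) (G : kgraph_data k) (R : comPzRingType) (A : nalg R) :=
  KPFam {
  kP : kg_vert G -> A;
  kS : kg_path G -> A;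
  kSg : kg_path G -> A
}.
Arguments kP {k G R A} f _ : rename.
Arguments kS {k G R A} f _ : rename.
Arguments kSg {k G R A} f _ : rename.

Section KP.
Variables (k : nat) (G : kgraph_data k) (R : comPzRingType) (A : nalg R).
Local Notation r := (kg_r G).
Local Notation s := (kg_s G).
Local Notation d := (kg_deg G).
Local Notation "x * y" := (na_mul A x y) : ring_scope.

Definition is_KP_family (F : kpfam G A) : Prop :=
  let P := kP F in let S := kS F in let Sg := kSg F in
  (forall e, d e = nk0 k -> S e = P (r e) /\ Sg e = P (r e)) /\
  (forall v, P v * P v = P v) /\
  (forall v w, v <> w -> P v * P w = 0) /\
  (forall l m n, d l <> nk0 k -> d m <> nk0 k -> kg_comp G l m n ->
     S l * S m = S n /\ Sg m * Sg l = Sg n) /\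
  (forall l, d l <> nk0 k ->
     [/\ P (r l) * S l = S l, S l * P (s l) = S l,
         P (s l) * Sg l = Sg l & Sg l * P (r l) = Sg l]) /\
  (forall n : Nk k, n <> nk0 k -> forall l m, le_n n l -> le_n n m ->
     (l = m -> Sg l * S m = P (s l)) /\ (l <> m -> Sg l * S m = 0)) /\
  (forall v (n : Nk k), n <> nk0 k ->
     exists sq : seq (kg_path G),
       [/\ List.NoDup sq,
           (forall l, List.In l sq <-> (r l = v /\ le_n n l)) &
           P v = \sum_(l <- sq) S l * Sg l]).

Definition homogeneous (F : kpfam G A) (n : Zk k) (x : A) : Prop :=
  exists sq : seq (R * kg_path G * kg_path G),
    (forall t, List.In t sq ->
       s t.1.2 = s t.2 /\
       forall i, (d t.1.2 i)%:Z - (d t.2 i)%:Z = n i) /\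
    x = \sum_(t <- sq) t.1.1 *: (kS F t.1.2 * kSg F t.2).

Definition is_ideal (I : A -> Prop) : Prop :=
  [/\ I 0,
      (forall x y, I x -> I y -> I (x + y)),
      (forall x, I x -> I (- x)),
      (forall (a : R) x, I x -> I (a *: x)) &
      (forall x y, I y -> I (x * y) /\ I (y * x))].

Definition graded_ideal (F : kpfam G A) (I : A -> Prop) : Prop :=
  forall x, I x -> exists sq : seq (Zk k * A),
    (forall t, List.In t sq -> homogeneous F t.1 t.2 /\ I t.2) /\
    x = \sum_(t <- sq) t.2.

Definition basic_ideal (F : kpfam G A) (I : A -> Prop) : Prop :=
  forall (a : R) v, a != 0 -> I (a *: kP F v) -> I (kP F v).

Definition HI (F : kpfam G A) (I : A -> Prop) : kg_vert G -> Prop :=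
  fun v => I (kP F v).

End KP.

Definition is_universal_KP (k : nat) (G : kgraph_data k) (R : comPzRingType)
  (A : nalg R) (F : kpfam G A) : Prop :=
  is_KP_family F /\
  forall (B : nalg R) (F' : kpfam G B), is_KP_family F' ->
    exists f : A -> B,
      [/\ is_alg_hom f,
          (forall v, f (kP F v) = kP F' v),
          (forall l, f (kS F l) = kS F' l),
          (forall l, f (kSg F l) = kSg F' l) &
          forall g : A -> B, is_alg_hom g ->
            (forall v, g (kP F v) = kP F' v) ->
            (forall l, g (kS F l) = kS F' l) ->
            (forall l, g (kSg F l) = kSg F' l) ->
            forall x, g x = f x].

Section Quot.
Variables (R : comPzRingType) (A : nalg R) (I : A -> Prop).

Definition coset (a : A) : A -> Prop := fun b => I (b - a).
Definition quot := {X : A -> Prop | exists a, X = coset a}.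
Definition qclass (a : A) : quot := exist _ (coset a) (ex_intro _ a erefl).

(* f : B -> A/I is an R-algebra homomorphism, where the operations of A/I
   are (a + I) + (b + I) = (a + b) + I, (a + I)(b + I) = ab + I,
   c (a + I) = c a + I. *)
Definition is_quot_hom (B : nalg R) (f : B -> quot) : Prop :=
  forall x y a b, f x = qclass a -> f y = qclass b ->
    [/\ f (x + y) = qclass (a + b),
        f (na_mul B x y) = qclass (na_mul A a b) &
        forall c : R, f (c *: x) = qclass (c *: a)].

Definition is_quot_iso (B : nalg R) (f : B -> quot) : Prop :=
  [/\ is_quot_hom f, injective f & forall X : quot, exists x, f x = X].
End Quot.

(* Let I be a basic graded ideal of A = KP_R(Lambda), H = H(I), and
   B = KP_R(Lambda \ H).  The proof is a universal-property argument.
   - H is hereditary (by KP3) and saturated (by KP4), so Lambda \ H is again a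
     row-finite, locally convex k-graph, and its sets Lambda^{<= n} are those
     of Lambda restricted to paths avoiding H.
   - The cosets of the generators of A form a KP (Lambda \ H)-family in the
     quotient algebra A/I, which gives theta : B -> A/I.
   - The generators of B, extended by zero on the paths with source in H, form
     a KP Lambda-family in B, which gives phi : A -> B.
   - Key lemma: a linear map killing every s_a s_{b^*} with s(b) in H kills
     the basic graded ideal I.  A homogeneous element is rewritten as a sum of
     terms s_a s_{b^*} with all b in a common Lambda^{<= N}; by KP3 each
     coefficient c satisfies c p_{s(b)} in I, so c = 0 unless s(b) is in H.
     Hence phi descends to psi : A/I -> B.
   - theta and psi are mutually inverse, because homomorphisms out of a
     universal KP algebra are determined by their values on the generators. *)

From HB Require Import structures.
From mathcomp Require Import all_boot all_order all_algebra.
From mathcomp Require Import boolp.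
From Stdlib Require Import Permutation.

Set Implicit Arguments.
Unset Strict Implicit.
Unset Printing Implicit Defensive.
Import GRing.Theory.
Local Open Scope ring_scope.

Lemma sig_eq (T : Type) (P : T -> Prop) (x y : {t | P t}) :
  proj1_sig x = proj1_sig y -> x = y.
Proof. by case: x => x px; case: y => y py /= exy; apply: eq_exist. Qed.

Section Additive.
Variables (U V : zmodType) (f : U -> V).
Hypothesis fD : {morph f : x y / x + y}.

Lemma additive0 : f 0 = 0.
Proof. by apply: (addrI (f 0)); rewrite -fD !addr0. Qed.

Lemma additiveB x y : f (x - y) = f x - f y.
Proof. by apply/eqP; rewrite eq_sym subr_eq -fD subrK. Qed.

Lemma additive_sum (T : Type) (s : seq T) (F : T -> U) :
  f (\sum_(t <- s) F t) = \sum_(t <- s) f (F t).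
Proof.
elim: s => [|t s IH]; first by rewrite !big_nil additive0.
by rewrite !big_cons fD IH.
Qed.
End Additive.

Section NonUnitalAlgebra.
Variables (R : comPzRingType) (A : nalg R).
Local Notation "x * y" := (na_mul A x y) : ring_scope.

Lemma nmul0l y : 0 * y = 0.
Proof. by have := na_mulZl 0 0 y; rewrite !scale0r. Qed.

Lemma nmul0r y : y * 0 = 0.
Proof. by have := na_mulZr 0 y 0; rewrite !scale0r. Qed.

Lemma nmulBl x y z : (x - y) * z = x * z - y * z.
Proof. exact: (additiveB (fun u v => na_mulDl u v z)). Qed.

Lemma nmulBr x y z : z * (x - y) = z * x - z * y.
Proof. exact: (additiveB (na_mulDr z)). Qed.

Lemma nmul_suml (T : Type) (s : seq T) (F : T -> A) y :
  (\sum_(t <- s) F t) * y = \sum_(t <- s) F t * y.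
Proof. exact: (additive_sum (fun u v => na_mulDl u v y)). Qed.

Lemma nmul_sumr (T : Type) (s : seq T) (F : T -> A) y :
  y * (\sum_(t <- s) F t) = \sum_(t <- s) y * F t.
Proof. exact: (additive_sum (na_mulDr y)). Qed.
End NonUnitalAlgebra.

Section AlgHom.
Variables (R : comPzRingType) (A C : nalg R) (h : A -> C).
Hypothesis hh : is_alg_hom h.

Lemma alg_homD : {morph h : x y / x + y}.
Proof. by case: hh. Qed.

Lemma alg_homZ (c : R) x : h (c *: x) = c *: h x.
Proof. by case: hh => _ []. Qed.

Lemma alg_homM x y : h (na_mul A x y) = na_mul C (h x) (h y).
Proof. by case: hh => _ []. Qed.

End AlgHom.

Lemma alg_hom_comp (R : comPzRingType) (A C D : nalg R) (h : A -> C) (g : C -> D) :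
  is_alg_hom h -> is_alg_hom g -> is_alg_hom (fun x => g (h x)).
Proof.
move=> hh hg; split; [|split] => [x y|c x|x y].
- by rewrite (alg_homD hh) (alg_homD hg).
- by rewrite (alg_homZ hh) (alg_homZ hg).
- by rewrite (alg_homM hh) (alg_homM hg).
Qed.

Section Ideal.
Variables (R : comPzRingType) (A : nalg R) (I : A -> Prop).
Hypothesis hI : is_ideal I.
Local Notation "x * y" := (na_mul A x y) : ring_scope.

Lemma ideal0 : I 0.
Proof. by case: hI. Qed.

Lemma idealD x y : I x -> I y -> I (x + y).
Proof. by case: hI => _ hD _ _ _; apply: hD. Qed.

Lemma idealN x : I x -> I (- x).
Proof. by case: hI => _ _ hN _ _; apply: hN. Qed.

Lemma idealB x y : I x -> I y -> I (x - y).
Proof. by move=> Ix /idealN; apply: idealD. Qed.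

Lemma idealZ (a : R) x : I x -> I (a *: x).
Proof. by case: hI => _ _ _ hZ _; apply: hZ. Qed.

Lemma idealMl x y : I y -> I (x * y).
Proof. by case: hI => _ _ _ _ hM /(hM x) []. Qed.

Lemma idealMr x y : I y -> I (y * x).
Proof. by case: hI => _ _ _ _ hM /(hM x) []. Qed.

Lemma ideal_sum (T : Type) (s : seq T) (F : T -> A) :
  (forall t, List.In t s -> I (F t)) -> I (\sum_(t <- s) F t).
Proof.
elim: s => [|t s IH] IF; first by rewrite big_nil; exact: ideal0.
by rewrite big_cons; apply: idealD; [apply: IF; left | apply: IH => u hu; apply: IF; right].
Qed.
End Ideal.

Section Quotient.
Variables (R : comPzRingType) (A : nalg R) (I : A -> Prop).
Hypothesis hI : is_ideal I.
Local Notation "x * y" := (na_mul A x y) : ring_scope.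

Lemma qclassP a b : qclass I a = qclass I b <-> I (a - b).
Proof.
split=> [/(congr1 (@proj1_sig _ _)) /= eab | Iab].
  by have : coset I b a by rewrite -eab /coset subrr; exact: ideal0 hI.
apply: sig_eq; apply: funext => x /=; apply: propext; rewrite /coset; split => hx.
- by rewrite -[x](subrK a) -addrA; apply: (idealD hI).
- have -> : x - a = (x - b) - (a - b) by rewrite opprB addrA subrK.
  exact: (idealB hI).
Qed.

Definition rep (X : quot I) : A := proj1_sig (cid (proj2_sig X)).

Lemma repK X : qclass I (rep X) = X.
Proof. by rewrite /rep; case: cid => a /= eXa; apply: sig_eq. Qed.

Lemma rep_qclass a : I (rep (qclass I a) - a).
Proof. by apply/qclassP; rewrite repK. Qed.

Lemma quot_ind (P : quot I -> Prop) : (forall a, P (qclass I a)) -> forall X, P X.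
Proof. by move=> Pq X; rewrite -(repK X). Qed.

Definition qT := quot I.
HB.instance Definition _ := gen_eqMixin qT.
HB.instance Definition _ := gen_choiceMixin qT.

Definition qadd (X Y : qT) : qT := qclass I (rep X + rep Y).
Definition qopp (X : qT) : qT := qclass I (- rep X).
Definition qzero : qT := qclass I 0.
Definition qscale (c : R) (X : qT) : qT := qclass I (c *: rep X).
Definition qmul (X Y : qT) : qT := qclass I (rep X * rep Y).

Lemma qaddE a b : qadd (qclass I a) (qclass I b) = qclass I (a + b).
Proof.
apply/qclassP; rewrite opprD addrACA.
by apply: (idealD hI); exact: rep_qclass.
Qed.

Lemma qoppE a : qopp (qclass I a) = qclass I (- a).
Proof. by apply/qclassP; rewrite -opprD; apply: (idealN hI); exact: rep_qclass. Qed.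

Lemma qscaleE c a : qscale c (qclass I a) = qclass I (c *: a).
Proof. by apply/qclassP; rewrite -scalerBr; apply: (idealZ hI); exact: rep_qclass. Qed.

Lemma qmulE a b : qmul (qclass I a) (qclass I b) = qclass I (a * b).
Proof.
apply/qclassP; set a' := rep _; set b' := rep _.
have -> : a' * b' - a * b = (a' - a) * b' + a * (b' - b).
  by rewrite nmulBl nmulBr addrA subrK.
by apply: (idealD hI); [apply: (idealMr hI) | apply: (idealMl hI)]; exact: rep_qclass.
Qed.

Lemma qaddA : associative qadd.
Proof. by elim/quot_ind=> a; elim/quot_ind=> b; elim/quot_ind=> c; rewrite !qaddE addrA. Qed.
Lemma qaddC : commutative qadd.
Proof. by elim/quot_ind=> a; elim/quot_ind=> b; rewrite !qaddE addrC. Qed.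
Lemma qadd0 : left_id qzero qadd.
Proof. by elim/quot_ind=> a; rewrite /qzero qaddE add0r. Qed.
Lemma qaddN : left_inverse qzero qopp qadd.
Proof. by elim/quot_ind=> a; rewrite qoppE qaddE addNr. Qed.
HB.instance Definition _ := GRing.isZmodule.Build qT qaddA qaddC qadd0 qaddN.

Lemma qclassD a b : (qclass I a : qT) + qclass I b = qclass I (a + b).
Proof. exact: qaddE. Qed.

Lemma qscaleA a b X : qscale a (qscale b X) = qscale (GRing.mul a b) X.
Proof. by elim/quot_ind: X => x; rewrite !qscaleE scalerA. Qed.
Lemma qscale1 : left_id 1 qscale.
Proof. by elim/quot_ind=> x; rewrite qscaleE scale1r. Qed.
Lemma qscaleDr : right_distributive qscale +%R.
Proof.
move=> c; elim/quot_ind=> a; elim/quot_ind=> b.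
by rewrite qclassD !qscaleE qclassD scalerDr.
Qed.
Lemma qscaleDl X : {morph qscale^~ X : a b / a + b}.
Proof. by elim/quot_ind: X => x a b; rewrite !qscaleE qclassD scalerDl. Qed.
HB.instance Definition _ :=
  GRing.Zmodule_isLmodule.Build R qT qscaleA qscale1 qscaleDr qscaleDl.

Lemma qclassZ c a : c *: (qclass I a : qT) = qclass I (c *: a).
Proof. exact: qscaleE. Qed.

Lemma qmulA X Y Z : qmul X (qmul Y Z) = qmul (qmul X Y) Z.
Proof.
elim/quot_ind: X => a; elim/quot_ind: Y => b; elim/quot_ind: Z => c.
by rewrite !qmulE na_mulA.
Qed.
Lemma qmulDl X Y Z : qmul (X + Y) Z = qmul X Z + qmul Y Z.
Proof.
elim/quot_ind: X => a; elim/quot_ind: Y => b; elim/quot_ind: Z => c.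
by rewrite qclassD !qmulE na_mulDl qclassD.
Qed.
Lemma qmulDr X Y Z : qmul X (Y + Z) = qmul X Y + qmul X Z.
Proof.
elim/quot_ind: X => a; elim/quot_ind: Y => b; elim/quot_ind: Z => c.
by rewrite qclassD !qmulE na_mulDr qclassD.
Qed.
Lemma qmulZl (c : R) X Y : qmul (c *: X) Y = c *: qmul X Y.
Proof.
elim/quot_ind: X => a; elim/quot_ind: Y => b.
by rewrite qclassZ !qmulE na_mulZl qclassZ.
Qed.
Lemma qmulZr (c : R) X Y : qmul X (c *: Y) = c *: qmul X Y.
Proof.
elim/quot_ind: X => a; elim/quot_ind: Y => b.
by rewrite qclassZ !qmulE na_mulZr qclassZ.
Qed.

Definition Qalg : nalg R := NAlg qmulA qmulDl qmulDr qmulZl qmulZr.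

Lemma qclassM a b : na_mul Qalg (qclass I a) (qclass I b) = qclass I (a * b).
Proof. exact: qmulE. Qed.

Lemma qclass_hom : is_alg_hom (fun a : A => qclass I a : Qalg).
Proof. by split; [|split] => [a b|c a|a b]; rewrite ?qclassD ?qclassZ ?qclassM. Qed.

Lemma qclass_ideal a : I a -> (qclass I a : Qalg) = 0.
Proof. by move=> Ia; apply/qclassP; rewrite subr0. Qed.

Lemma alg_hom_quot_hom (C : nalg R) (f : C -> Qalg) :
  is_alg_hom f -> is_quot_hom f.
Proof.
move=> hf x y a b fx fy; split=> [||c].
- by rewrite (alg_homD hf) fx fy qclassD.
- by rewrite (alg_homM hf) fx fy qclassM.
- by rewrite (alg_homZ hf) fx qclassZ.
Qed.

Section Lift.
Variables (C : nalg R) (f : A -> C).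
Hypotheses (hf : is_alg_hom f) (fI : forall a, I a -> f a = 0).

Definition qlift (X : Qalg) : C := f (rep X).

Lemma qlift_qclass a : qlift (qclass I a) = f a.
Proof.
by apply/eqP; rewrite -subr_eq0 -(additiveB (alg_homD hf)) fI //; exact: rep_qclass.
Qed.

Lemma qlift_hom : is_alg_hom qlift.
Proof.
split; [|split] => [X Y|c X|X Y]; elim/quot_ind: X => a; try elim/quot_ind: Y => b.
- by rewrite qclassD !qlift_qclass (alg_homD hf).
- by rewrite qclassZ !qlift_qclass (alg_homZ hf).
- by rewrite qclassM !qlift_qclass (alg_homM hf).
Qed.
End Lift.
End Quotient.

Lemma nkadd0 k (m : Nk k) : nkadd (nk0 k) m = m.
Proof. by apply/ffunP => i; rewrite !ffunE. Qed.

Lemma nkaddn0 k (m : Nk k) : nkadd m (nk0 k) = m.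
Proof. by apply/ffunP => i; rewrite !ffunE addn0. Qed.

Lemma nkleP k (m n : Nk k) : nkle m n <-> forall i, (m i <= n i)%N.
Proof. by split => [/forallP|?]; last apply/forallP. Qed.

Lemma nke_neq0 k (i : 'I_k) : nke i <> nk0 k.
Proof. by move/ffunP => /(_ i); rewrite !ffunE eqxx. Qed.

Section KGraphFacts.
Variables (k : nat) (G : kgraph_data k).
Hypothesis hG : is_kgraph G.
Local Notation r := (kg_r G).
Local Notation s := (kg_s G).
Local Notation comp := (kg_comp G).
Local Notation d := (kg_deg G).

Lemma comp_rs l m n : comp l m n -> [/\ s l = r m, r n = r l & s n = s m].
Proof. by case: hG => _ [_ [h _]]; apply: h. Qed.

Lemma comp_ex l m : s l = r m -> exists n, comp l m n.
Proof. by case: hG => _ [_ [_ [h _]]]; apply: h. Qed.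

Lemma comp_fun l m n n' : comp l m n -> comp l m n' -> n = n'.
Proof. by case: hG => _ [_ [_ [_ [h _]]]]; apply: h. Qed.

Lemma id_ex v : exists e, [/\ r e = v, s e = v, d e = nk0 k,
  (forall l, r l = v -> comp e l l) & (forall l, s l = v -> comp l e l)].
Proof. by case: hG => _ [_ [_ [_ [_ [_ [h _]]]]]]; apply: h. Qed.

Lemma comp_deg l m n : comp l m n -> d n = nkadd (d l) (d m).
Proof. by case: hG => _ [_ [_ [_ [_ [_ [_ [h _]]]]]]]; apply: h. Qed.

Lemma ufact l (a b : Nk k) : d l = nkadd a b ->
  exists mu nu, [/\ comp mu nu l, d mu = a, d nu = b &
    forall mu' nu', comp mu' nu' l -> d mu' = a -> d nu' = b ->
      mu' = mu /\ nu' = nu].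
Proof. by case: hG => _ [_ [_ [_ [_ [_ [_ [_ h]]]]]]]; apply: h. Qed.

(* By unique factorization, every degree-0 path is the identity at its range. *)
Lemma deg0_id e : d e = nk0 k ->
  [/\ s e = r e, (forall l, r l = r e -> comp e l l) &
      (forall l, s l = r e -> comp l e l)].
Proof.
move=> de.
have [i [ri si di hil hir]] := id_ex (r e).
have [j [rj sj dj hjl hjr]] := id_ex (s e).
have de00 : d e = nkadd (nk0 k) (nk0 k) by rewrite nkadd0.
have [mu [nu [_ _ _ uniq_fact]]] := ufact de00.
have [ei ne] := uniq_fact _ _ (hil e erefl) di de.
have [ej nj] := uniq_fact _ _ (hjr e erefl) de dj.
have ie : i = e by rewrite ei ej.
have je : j = e by rewrite nj ne.
have se : s e = r e by rewrite -{1}ie si.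
split => // l hl; first by rewrite -ie; apply: hil.
by rewrite -je; apply: hjr; rewrite hl se.
Qed.

Lemma id_unique e e' : d e = nk0 k -> d e' = nk0 k -> r e = r e' -> e = e'.
Proof.
move=> de de' ree.
have [se hl _] := deg0_id de.
have [se' _ hr'] := deg0_id de'.
apply: (comp_fun (l := e) (m := e')); first by apply: hr'; rewrite se ree.
by apply: hl; rewrite ree.
Qed.

Lemma comp_id_l l m n : d l = nk0 k -> comp l m n -> n = m.
Proof.
move=> dl c; have [slm _ _] := comp_rs c.
have [se hl _] := deg0_id dl.
by apply: comp_fun c _; apply: hl; rewrite -slm se.
Qed.

Lemma comp_id_r l m n : d m = nk0 k -> comp l m n -> n = l.
Proof.
move=> dm c; have [slm _ _] := comp_rs c.
have [_ _ hr] := deg0_id dm.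
by apply: comp_fun c _; apply: hr.
Qed.

Lemma le_n_exact l : le_n (d l) l.
Proof. by split; [apply/nkleP | move=> i; rewrite ltnn]. Qed.

Lemma le_n_comp b g x m : comp b g x -> le_n m g -> le_n (nkadd (d b) m) x.
Proof.
move=> c [/nkleP hle hno]; have dx := comp_deg c; have [_ _ sx] := comp_rs c.
split; first by apply/nkleP => i; rewrite dx !ffunE leq_add2l.
by move=> i; rewrite dx !ffunE ltn_add2l sx; exact: hno.
Qed.

Lemma le_n0 l : le_n (nk0 k) l -> d l = nk0 k.
Proof.
move=> [/nkleP hle _]; apply/ffunP => i.
by have := hle i; rewrite !ffunE leqn0 => /eqP.
Qed.
End KGraphFacts.

Section KPFacts.
Variables (k : nat) (G : kgraph_data k).
Hypothesis hG : is_kgraph G.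
Variables (R : comPzRingType) (A : nalg R) (F : kpfam G A).
Hypothesis hF : is_KP_family F.
Local Notation r := (kg_r G).
Local Notation s := (kg_s G).
Local Notation comp := (kg_comp G).
Local Notation d := (kg_deg G).
Local Notation "x * y" := (na_mul A x y) : ring_scope.
Local Notation P := (kP F).
Local Notation S := (kS F).
Local Notation Sg := (kSg F).

Lemma KP_vertex e : d e = nk0 k -> S e = P (r e) /\ Sg e = P (r e).
Proof. by case: hF => h _; apply: h. Qed.

Lemma KP_idem v : P v * P v = P v.
Proof. by case: hF => _ [h _]; apply: h. Qed.

Lemma KP_orth v w : v <> w -> P v * P w = 0.
Proof. by case: hF => _ [_ [h _]]; apply: h. Qed.

Lemma KP2_comp l m n : d l <> nk0 k -> d m <> nk0 k -> comp l m n ->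
  S l * S m = S n /\ Sg m * Sg l = Sg n.
Proof. by case: hF => _ [_ [_ [h _]]]; apply: h. Qed.

Lemma KP2_proj l : d l <> nk0 k ->
  [/\ P (r l) * S l = S l, S l * P (s l) = S l,
      P (s l) * Sg l = Sg l & Sg l * P (r l) = Sg l].
Proof. by case: hF => _ [_ [_ [_ [h _]]]]; apply: h. Qed.

Lemma KP3_le (n : Nk k) : n <> nk0 k -> forall l m, le_n n l -> le_n n m ->
  (l = m -> Sg l * S m = P (s l)) /\ (l <> m -> Sg l * S m = 0).
Proof. by case: hF => _ [_ [_ [_ [_ [h _]]]]]; apply: h. Qed.

Lemma KP4_sum v (n : Nk k) : n <> nk0 k ->
  exists sq : seq (kg_path G),
    [/\ List.NoDup sq, (forall l, List.In l sq <-> (r l = v /\ le_n n l)) &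
        P v = \sum_(l <- sq) S l * Sg l].
Proof. by case: hF => _ [_ [_ [_ [_ [_ h]]]]]; apply: h. Qed.

(* The projections (KP2) also hold for vertices, by (KP1). *)
Lemma PS l : P (r l) * S l = S l.
Proof.
have [dl|dl] := pselect (d l = nk0 k); last by case: (KP2_proj dl).
by have [-> _] := KP_vertex dl; rewrite KP_idem.
Qed.

Lemma SP l : S l * P (s l) = S l.
Proof.
have [dl|dl] := pselect (d l = nk0 k); last by case: (KP2_proj dl).
by have [se _ _] := deg0_id hG dl; have [-> _] := KP_vertex dl; rewrite se KP_idem.
Qed.

Lemma PSg l : P (s l) * Sg l = Sg l.
Proof.
have [dl|dl] := pselect (d l = nk0 k); last by case: (KP2_proj dl).
by have [se _ _] := deg0_id hG dl; have [_ ->] := KP_vertex dl; rewrite se KP_idem.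
Qed.

Lemma SgP l : Sg l * P (r l) = Sg l.
Proof.
have [dl|dl] := pselect (d l = nk0 k); last by case: (KP2_proj dl).
by have [_ ->] := KP_vertex dl; rewrite KP_idem.
Qed.

Lemma KP2_all l m n : comp l m n -> S l * S m = S n /\ Sg m * Sg l = Sg n.
Proof.
move=> c; have [slm _ _] := comp_rs hG c.
have [dl|dl] := pselect (d l = nk0 k).
  have [se _ _] := deg0_id hG dl; have [-> ->] := KP_vertex dl.
  by rewrite (comp_id_l hG dl c) -se slm PS SgP.
have [dm|dm] := pselect (d m = nk0 k); last exact: KP2_comp.
have [-> ->] := KP_vertex dm.
by rewrite (comp_id_r hG dm c) -slm SP PSg.
Qed.

(* (KP3) for Lambda^{<= 0}, i.e. for vertices, by (KP1). *)
Lemma KP3_all (n : Nk k) l m : le_n n l -> le_n n m ->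
  (l = m -> Sg l * S m = P (s l)) /\ (l <> m -> Sg l * S m = 0).
Proof.
have [n0|n0] := pselect (n = nk0 k); last exact: KP3_le.
move: n0 => -> hl hm; have dl := le_n0 hl; have dm := le_n0 hm.
have [sl _ _] := deg0_id hG dl.
have [_ ->] := KP_vertex dl; have [-> _] := KP_vertex dm.
split => [<-|ne]; first by rewrite sl KP_idem.
by apply: KP_orth => rlm; apply: ne; apply: (id_unique hG).
Qed.
End KPFacts.

Section ImageFamily.
Variables (k : nat) (G : kgraph_data k) (R : comPzRingType) (A C : nalg R).
Variables (F : kpfam G A) (h : A -> C).
Hypotheses (hF : is_KP_family F) (hh : is_alg_hom h).

Definition image_family : kpfam G C :=
  KPFam (fun v => h (kP F v)) (fun l => h (kS F l)) (fun l => h (kSg F l)).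

Lemma image_family_KP : is_KP_family image_family.
Proof.
have h0 := additive0 (alg_homD hh).
split; first by move=> e de; have [/= -> ->] := KP_vertex hF de.
split; first by move=> v; rewrite /= -(alg_homM hh) KP_idem.
split; first by move=> v w ne; rewrite /= -(alg_homM hh) KP_orth.
split.
  by move=> l m n dl dm c; have [/= e1 e2] := KP2_comp hF dl dm c; rewrite -!(alg_homM hh) e1 e2.
split.
  by move=> l dl; have [e1 e2 e3 e4] := KP2_proj hF dl; rewrite /= -!(alg_homM hh) e1 e2 e3 e4.
split.
  move=> n n0 l m hl hm; have [e1 e2] := KP3_le hF n0 hl hm.
  by split => e; rewrite /= -(alg_homM hh); [rewrite (e1 e) | rewrite (e2 e) h0].
move=> v n n0; have [L [nd hL hP]] := KP4_sum hF v n0.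
exists L; split => //=; rewrite hP (additive_sum (alg_homD hh)).
by apply: eq_bigr => l _; exact: (alg_homM hh).
Qed.
End ImageFamily.

Lemma universal_ext k (G : kgraph_data k) (R : comPzRingType) (A C : nalg R)
    (F : kpfam G A) (g1 g2 : A -> C) :
  is_universal_KP F -> is_alg_hom g1 -> is_alg_hom g2 ->
  (forall v, g1 (kP F v) = g2 (kP F v)) ->
  (forall l, g1 (kS F l) = g2 (kS F l)) ->
  (forall l, g1 (kSg F l) = g2 (kSg F l)) ->
  forall x, g1 x = g2 x.
Proof.
move=> [hF hU] hg1 hg2 eP eS eSg x.
have [f [_ _ _ _ f_unique]] := hU C _ (image_family_KP hF hg2).
by rewrite (f_unique g1) // (f_unique g2).
Qed.

Lemma eq_big_In (T : Type) (V : zmodType) (s : seq T) (F1 F2 : T -> V) :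
  (forall t, List.In t s -> F1 t = F2 t) ->
  \sum_(t <- s) F1 t = \sum_(t <- s) F2 t.
Proof.
elim: s => [|t s IH] eF; first by rewrite !big_nil.
by rewrite !big_cons eF /=; [congr (_ + _); apply: IH => u hu; apply: eF; right | left].
Qed.

Lemma Permutation_sum (T : Type) (V : zmodType) (s1 s2 : seq T) (g : T -> V) :
  Permutation s1 s2 -> \sum_(t <- s1) g t = \sum_(t <- s2) g t.
Proof.
elim=> [|x s s' _ IH|x y s|s s' s'' _ IH1 _ IH2] //.
- by rewrite !big_cons IH.
- by rewrite !big_cons addrCA.
- by rewrite IH1 IH2.
Qed.

Lemma In_filter (T : Type) (a : pred T) (s : seq T) x :
  List.In x (filter a s) -> List.In x s /\ a x.
Proof.
elim: s => [|y s IH] //=; case: ifP => ay /=.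
- by case=> [<-|/IH[]]; split => //; [left | right].
- by move/IH => [? ?]; split => //; right.
Qed.

(* The proof
   is by induction on the length, splitting off all terms with the first key. *)
Lemma sum_by_keys_eq0 (R : comPzRingType) (T K : Type) (V : lmodType R)
    (key : T -> K) (c : T -> R) (g : K -> V) (s : seq T) :
  (forall t, List.In t s ->
     (\sum_(u <- s) if `[< key u = key t >] then c u else 0) *: g (key t) = 0) ->
  \sum_(u <- s) c u *: g (key u) = 0.
Proof.
move: (leqnn (size s)); move: {2}(size s) => n.
elim: n s => [|n IH] [|t s] //=; rewrite ?big_nil // => hsz hkeys.
set same := fun u => `[< key u = key t >].
rewrite (bigID same) /=.
have -> : \sum_(u <- t :: s | same u) c u *: g (key u) =
          (\sum_(u <- t :: s) if same u then c u else 0) *: g (key t).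
  by rewrite -big_mkcond scaler_suml; apply: eq_bigr => u /asboolP eu; rewrite eu.
rewrite hkeys /=; last by left.
rewrite add0r -big_filter; apply: IH.
  by rewrite /= /same asboolT //= size_filter (leq_trans (count_size _ _)).
move=> t' ht'f; have [ht' nt'] := In_filter ht'f.
have kt : key t' <> key t.
  by move=> e; move: nt'; rewrite /= /same asboolT.
rewrite big_filter -(hkeys t' ht'); congr (_ *: _).
rewrite [RHS](bigID same) /= [X in _ = X + _]big1 ?add0r // => u /asboolP eu.
by case: asboolP => // eu'; case: kt; rewrite -eu' eu.
Qed.

(* Using (KP4) at s(b), every homogeneous element
   of degree n can be rewritten as a sum of terms whose ghost parts b all lie
   in the same Lambda^{<= N}; by (KP3) the coefficients of such a sum are
   then recovered by multiplying with s_{a^*} on the left and s_b on the right. *)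
Section NormalForm.
Variables (k : nat) (G : kgraph_data k).
Hypothesis hG : is_kgraph G.
Variables (R : comPzRingType) (A : nalg R) (F : kpfam G A).
Hypothesis hF : is_KP_family F.
Local Notation r := (kg_r G).
Local Notation s := (kg_s G).
Local Notation d := (kg_deg G).
Local Notation "x * y" := (na_mul A x y) : ring_scope.
Local Notation P := (kP F).
Local Notation S := (kS F).
Local Notation Sg := (kSg F).
Local Notation path := (kg_path G).
Local Notation term := (R * path * path)%type.

Definition term_val (t : term) : A := t.1.1 *: (S t.1.2 * Sg t.2).

Definition of_degree (n : Zk k) (a b : path) : Prop :=
  s a = s b /\ forall i, (d a i)%:Z - (d b i)%:Z = n i.

Definition normal_term (N : Nk k) (n : Zk k) (t : term) : Prop :=
  of_degree n t.1.2 t.2 /\ le_n N t.2.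

Lemma bound_ghost_degrees (sq : seq term) :
  exists N : Nk k, forall t, List.In t sq -> nkle (d t.2) N.
Proof.
elim: sq => [|t sq [N hN]]; first by exists (nk0 k).
exists [ffun i => maxn (d t.2 i) (N i)] => u /= [<-|hu]; apply/nkleP => i.
  by rewrite ffunE leq_maxl.
by rewrite ffunE; apply: leq_trans (leq_maxr _ _); move/nkleP: (hN u hu).
Qed.

Lemma expand_through (N m : Nk k) (n : Zk k) (c : R) a b (L : seq path) :
  of_degree n a b -> nkadd (d b) m = N ->
  (forall g, List.In g L -> r g = s b /\ le_n m g) ->
  exists sq, (forall t, List.In t sq -> normal_term N n t) /\
    \sum_(g <- L) c *: ((S a * (S g * Sg g)) * Sg b) = \sum_(t <- sq) term_val t.
Proof.
move=> [sab hn] hN; elim: L => [|g L IH] hL; first by exists [::]; rewrite !big_nil.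
have [sq [hsq esq]] := IH (fun x hx => hL x (or_intror hx)).
have [rg lg] := hL g (or_introl erefl).
have [x cx] := comp_ex hG (etrans sab (esym rg)).
have [y cy] := comp_ex hG (esym rg).
have [_ _ sx] := comp_rs hG cx; have [_ _ sy] := comp_rs hG cy.
exists ((c, x, y) :: sq); split.
- move=> t /= [<-|ht]; last exact: hsq.
  split; last by rewrite -hN; exact: le_n_comp cy lg.
  split => [|i]; first by rewrite /= sx sy.
  rewrite /= (comp_deg hG cx) (comp_deg hG cy) !ffunE -hn.
  by rewrite !PoszD opprD addrACA subrr addr0.
- rewrite !big_cons esq /term_val /=; congr (_ *: _ + _).
  have [<- _] := KP2_all hG hF cx; have [_ <-] := KP2_all hG hF cy.
  by rewrite -!na_mulA.
Qed.

Lemma normalize_term (N : Nk k) (n : Zk k) (c : R) a b :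
  of_degree n a b -> nkle (d b) N ->
  exists sq, (forall t, List.In t sq -> normal_term N n t) /\
    term_val (c, a, b) = \sum_(t <- sq) term_val t.
Proof.
move=> hab /nkleP hle.
have [dbN|dbN] := pselect (d b = N).
  exists [:: (c, a, b)]; rewrite big_seq1; split => // t [<-|//].
  by split; rewrite // -dbN; exact: le_n_exact.
pose m : Nk k := [ffun i => (N i - d b i)%N].
have hN : nkadd (d b) m = N by apply/ffunP => i; rewrite !ffunE subnKC.
have m0 : m <> nk0 k by move=> m0; apply: dbN; rewrite -hN m0 nkaddn0.
have [L [_ hL hP]] := KP4_sum hF (s b) m0.
have [sq [hsq esq]] := expand_through c hab hN (fun g hg => proj1 (hL g) hg).
exists sq; split => //; rewrite -esq /term_val /= -{1}(SP hG hF a) (proj1 hab) hP.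
by rewrite nmul_sumr nmul_suml scaler_sumr.
Qed.

Lemma homogeneous_normal_form (n : Zk k) z : homogeneous F n z ->
  exists N sq, (forall t, List.In t sq -> normal_term N n t) /\
    z = \sum_(t <- sq) term_val t.
Proof.
move=> [sq0 [hsq0 ->]]; have [N hN] := bound_ghost_degrees sq0.
exists N; elim: sq0 hsq0 hN => [|[[c a] b] sq0 IH] hsq0 hN.
  by exists [::]; rewrite !big_nil.
have [sq1 [h1 e1]] := IH (fun u hu => hsq0 u (or_intror hu))
                         (fun u hu => hN u (or_intror hu)).
have [sq2 [h2 e2]] :=
  normalize_term c (hsq0 _ (or_introl erefl)) (hN _ (or_introl erefl)).
exists (sq2 ++ sq1); split; last by rewrite big_cons big_cat -e1 -e2.
by move=> t /(List.in_app_or sq2 sq1 t) [] ht; [apply: h2 | apply: h1].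
Qed.

Lemma isolate_coeff (N : Nk k) (n : Zk k) (sq : seq term) a b :
  (forall t, List.In t sq -> normal_term N n t) -> of_degree n a b -> le_n N b ->
  Sg a * ((\sum_(t <- sq) term_val t) * S b) =
  (\sum_(t <- sq) if `[< (t.1.2, t.2) = (a, b) >] then t.1.1 else 0) *: P (s b).
Proof.
move=> hsq [sab hn] lb; rewrite nmul_suml nmul_sumr scaler_suml.
apply: eq_big_In => t /hsq [[sat hnt] lbt].
rewrite /term_val na_mulZl na_mulZr -na_mulA na_mulA.
have [ebb|nbb] := pselect (t.2 = b); last first.
  rewrite (proj2 (KP3_all hG hF lbt lb) nbb) nmul0r scaler0.
  by rewrite asboolF ?scale0r // => -[].
rewrite (proj1 (KP3_all hG hF lbt lb) ebb).
have dta : d t.1.2 = d a.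
  apply/ffunP => i; have := hnt i; rewrite -(hn i) ebb.
  by move/(congr1 (fun z => z + (d b i)%:Z)); rewrite !subrK => -[].
have la : le_n (d a) t.1.2 by rewrite -dta; exact: le_n_exact.
have [eta|nta] := pselect (a = t.1.2).
  rewrite (proj1 (KP3_all hG hF (le_n_exact a) la) eta).
  by rewrite sab -ebb (KP_idem hF) -eta asboolT.
rewrite (proj2 (KP3_all hG hF (le_n_exact a) la) nta) nmul0l scaler0.
by rewrite asboolF ?scale0r // => -[e _]; apply: nta.
Qed.
End NormalForm.

(* A linear map on an algebra generated by a Kumjian--Pask family
   which kills every s_a s_{b^*} with p_{s(b)} in I kills the whole basic
   graded ideal I: in a normal form of a homogeneous element z of I, the
   coefficient c of a surviving s_a s_{b^*} satisfies
   c p_{s(b)} = s_{a^*} z s_b in I, so c = 0 because I is basic. *)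
Section KillIdeal.
Variables (k : nat) (G : kgraph_data k).
Hypothesis hG : is_kgraph G.
Variables (R : comPzRingType) (A : nalg R) (F : kpfam G A) (I : A -> Prop).
Hypotheses (hF : is_KP_family F) (hI : is_ideal I) (hb : basic_ideal F I).
Variables (V : lmodType R) (f : A -> V).
Hypotheses (fD : {morph f : x y / x + y}) (fZ : forall c x, f (c *: x) = c *: f x).
Local Notation s := (kg_s G).
Local Notation "x * y" := (na_mul A x y) : ring_scope.
Local Notation P := (kP F).
Local Notation S := (kS F).
Local Notation Sg := (kSg F).
Hypothesis f_out : forall a b, s a = s b -> I (P (s b)) -> f (S a * Sg b) = 0.

Lemma kill_homogeneous n z : homogeneous F n z -> I z -> f z = 0.
Proof.
move=> /(homogeneous_normal_form hG hF) [N [sq [hsq ->]]] Iz.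
rewrite (additive_sum fD).
rewrite (eq_bigr (fun t => t.1.1 *: f (S t.1.2 * Sg t.2))) => [|t _]; last first.
  by rewrite /term_val fZ.
apply: (sum_by_keys_eq0 (key := fun t => (t.1.2, t.2)) (c := fun t => t.1.1)
          (g := fun ab => f (S ab.1 * Sg ab.2))) => t /hsq [[sab hn] lb] /=.
have [Is|Is] := pselect (I (P (s t.2))); first by rewrite f_out // scaler0.
set coef := \sum_(u <- sq) _.
suff -> : coef = 0 by rewrite scale0r.
apply: contrapT => /eqP coef0; apply: Is; apply: (hb coef0).
rewrite -(isolate_coeff hG hF hsq (conj sab hn) lb).
by apply: (idealMl hI); apply: (idealMr hI).
Qed.

Lemma kill_graded_ideal x : graded_ideal F I -> I x -> f x = 0.
Proof.
move=> hg /hg [sq [hsq ->]]; rewrite (additive_sum fD).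
rewrite (eq_big_In (F2 := fun _ => 0)) ?big1 // => t /hsq [ht It].
exact: kill_homogeneous ht It.
Qed.
End KillIdeal.

Section HereditarySaturated.
Variables (k : nat) (G : kgraph_data k).
Hypothesis hG : is_kgraph G.
Variables (R : comPzRingType) (A : nalg R) (F : kpfam G A) (I : A -> Prop).
Hypotheses (hF : is_KP_family F) (hI : is_ideal I).
Local Notation r := (kg_r G).
Local Notation s := (kg_s G).
Local Notation d := (kg_deg G).
Local Notation S := (kS F).
Local Notation Sg := (kSg F).
Local Notation path := (kg_path G).
Local Notation H := (HI F I).
Local Notation G' := (kg_remove H).

(* p_{s(l)} = s_{l^*} p_{r(l)} s_l. *)
Lemma HI_hereditary l : H (r l) -> H (s l).
Proof.
rewrite /HI => Hr.
have [dl|dl] := pselect (d l = nk0 k); first by have [-> _ _] := deg0_id hG dl.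
rewrite -(proj1 (KP3_le hF dl (le_n_exact l) (le_n_exact l)) erefl) -(PS hF l).
by apply: (idealMl hI); apply: (idealMr hI).
Qed.

Lemma S_in_ideal l : H (s l) -> I (S l).
Proof. by move=> Hs; rewrite -(SP hG hF l); apply: (idealMl hI). Qed.

Lemma Sg_in_ideal l : H (s l) -> I (Sg l).
Proof. by move=> Hs; rewrite -(PSg hG hF l); apply: (idealMr hI). Qed.

Lemma notHI_source l : ~ H (s l) -> ~ H (r l) /\ ~ H (s l).
Proof. by move=> Hs; split => // /HI_hereditary. Qed.

(* Saturation: by (KP4) at e_i, a vertex outside H(I) which receives an
   edge of degree e_i receives one whose source is outside H(I). *)
Lemma HI_saturated w (i : 'I_k) : ~ H w -> (exists a, r a = w /\ d a = nke i) ->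
  exists a, [/\ r a = w, d a = nke i & ~ H (s a)].
Proof.
move=> Hw [a [ra da]]; apply: contrapT => no_edge; apply: Hw; rewrite /HI.
have [L [_ hL ->]] := KP4_sum hF w (@nke_neq0 k i).
apply: (ideal_sum hI) => g /hL [rg [/nkleP hle hmax]].
apply: (idealMr hI); apply: S_in_ideal.
have dgi : d g i = 1%N.
  have := hle i; rewrite !ffunE eqxx.
  case dgi: (d g i) => [|[|m]] // _; exfalso.
  have dg0 : d g = nk0 k.
    apply/ffunP => j; rewrite !ffunE; have := hle j; rewrite !ffunE.
    by case: eqP => [->|_]; rewrite ?dgi // leqn0 => /eqP.
  have [sg _ _] := deg0_id hG dg0.
  by apply: (hmax i); [rewrite dgi !ffunE eqxx | exists a; rewrite ra sg rg].
have dg : d g = nke i.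
  apply/ffunP => j; rewrite !ffunE; have := hle j; rewrite !ffunE.
  by case: eqP => [->|_]; rewrite ?dgi // leqn0 => /eqP.
by apply: contrapT => Hsg; apply: no_edge; exists g.
Qed.

Lemma rm_vert_eq (x y : rm_vert H) : proj1_sig x = proj1_sig y -> x = y.
Proof. exact: sig_eq. Qed.

Lemma rm_path_eq (x y : rm_path H) : proj1_sig x = proj1_sig y -> x = y.
Proof. exact: sig_eq. Qed.

Lemma le_n_remove (n : Nk k) (l : kg_path G') : le_n n l <-> le_n n (proj1_sig l).
Proof.
split=> -[hle hmax]; split => // i hi [e [re de]].
- have [e' [re' de' se']] :=
    HI_saturated (proj2 (proj2_sig l)) (ex_intro _ e (conj re de)).
  have pe : ~ H (r e') /\ ~ H (s e') by rewrite re'; split => //; exact: (proj2_sig l).2.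
  by apply: (hmax i hi); exists (exist _ e' pe); split => //; apply: rm_vert_eq.
- by apply: (hmax i hi); exists (proj1_sig e); split => //; exact: (congr1 (@proj1_sig _ _) re).
Qed.

Lemma remove_kgraph : is_kgraph G'.
Proof.
have [[fp ifp] [[fv ifv] [hrs [hex [hfun [hass [hid [hdeg hfac]]]]]]]] := hG.
split; first by exists (fun l : rm_path H => fp (proj1_sig l)) => x y /ifp /rm_path_eq.
split; first by exists (fun v : rm_vert H => fv (proj1_sig v)) => x y /ifv /rm_vert_eq.
split; first by move=> l m n /hrs [h1 h2 h3]; split; apply: rm_vert_eq.
split.
  move=> l m /(congr1 (@proj1_sig _ _)) /= /hex [n c]; have [_ rn sn] := hrs _ _ _ c.
  have pn : ~ H (r n) /\ ~ H (s n) by rewrite rn sn; split; [exact: (proj2_sig l).1 | exact: (proj2_sig m).2].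
  by exists (exist _ n pn).
split; first by move=> l m n n' c c'; apply: rm_path_eq; exact: hfun c c'.
split; first by move=> l m n lm mn x; apply: hass.
split.
  move=> v; have [e [re se de hl hr]] := hid (proj1_sig v).
  have pe : ~ H (r e) /\ ~ H (s e) by rewrite re se; split; exact: (proj2_sig v).
  exists (exist _ e pe); split => //; try by apply: rm_vert_eq.
  - by move=> l /(congr1 (@proj1_sig _ _)) /= hl'; apply: hl.
  - by move=> l /(congr1 (@proj1_sig _ _)) /= hr'; apply: hr.
split; first by move=> l m n c; apply: hdeg.
move=> l a b hd; have [mu [nu [c dmu dnu u]]] := hfac _ _ _ hd.
have [smn rl sl] := hrs _ _ _ c.
have pnu : ~ H (r nu) /\ ~ H (s nu).
  by apply: notHI_source; rewrite -sl; exact: (proj2_sig l).2.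
have pmu : ~ H (r mu) /\ ~ H (s mu).
  by rewrite -rl smn; split; [exact: (proj2_sig l).1 | exact: pnu.1].
exists (exist _ mu pmu), (exist _ nu pnu); split => // mu' nu' c' dmu' dnu'.
by have [e1 e2] := u _ _ c' dmu' dnu'; split; apply: rm_path_eq.
Qed.

Definition keep (L : seq path) : seq (rm_path H) :=
  flatten [seq match pselect (~ H (r l) /\ ~ H (s l)) with
               | left p => [:: exist _ l p] | right _ => [::] end | l <- L].

Lemma In_keep L (x : rm_path H) : List.In x (keep L) <-> List.In (proj1_sig x) L.
Proof.
elim: L => [|l L IH] //=; rewrite /keep /= -/(keep L).
case: pselect => p /=; last first.
  rewrite IH; split; [by right | case=> // e; exfalso; apply: p; rewrite e; exact: (proj2_sig x)].
split; first by case=> [<-|/IH]; [left | right].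
by case=> [e|/IH]; [left; apply: rm_path_eq | right].
Qed.

Lemma NoDup_keep L : List.NoDup L -> List.NoDup (keep L).
Proof.
elim: L => [|l L IH] /=; first by constructor.
move=> /List.NoDup_cons_iff [nl ndL]; rewrite /keep /= -/(keep L).
case: pselect => p /=; last exact: IH.
by constructor; [move/In_keep | exact: IH].
Qed.

Lemma sum_keep (V : zmodType) L (g : path -> V) :
  (forall l, List.In l L -> ~ H (r l)) -> (forall l, H (s l) -> g l = 0) ->
  \sum_(x <- keep L) g (proj1_sig x) = \sum_(l <- L) g l.
Proof.
elim: L => [|l L IH] hr hg; first by rewrite !big_nil.
rewrite /keep /= big_cat /= -/(keep L) big_cons IH //; last by move=> x hx; apply: hr; right.
case: pselect => p /=; first by rewrite big_seq1.
rewrite big_nil hg //; apply: contrapT => Hs; apply: p; split => //.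
by apply: hr; left.
Qed.

Lemma keep_row (v : rm_vert H) (n : Nk k) L :
  (forall l, List.In l L <-> (r l = proj1_sig v /\ le_n n l)) ->
  forall x : kg_path G', List.In x (keep L) <-> (kg_r G' x = v /\ le_n n x).
Proof.
move=> hL x; rewrite In_keep hL le_n_remove.
split=> -[e lx]; split => //; first by apply: rm_vert_eq.
exact: (congr1 (@proj1_sig _ _) e).
Qed.

Lemma remove_row_finite : row_finite G -> row_finite G'.
Proof.
move=> rf v m; have [sq h] := rf (proj1_sig v) m.
by exists (keep sq) => l rl dl; apply/In_keep; apply: h => //; exact: (congr1 (@proj1_sig _ _) rl).
Qed.

Lemma remove_locally_convex : locally_convex G -> locally_convex G'.
Proof.
move=> lc v i j ij l mu rl dl rmu dmu.
have [[a [ra da]] [b [rb db]]] := lc (proj1_sig v) i j ij (proj1_sig l) (proj1_sig mu)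
   (congr1 (@proj1_sig _ _) rl) dl (congr1 (@proj1_sig _ _) rmu) dmu.
have [a' [ra' da' sa']] := HI_saturated (proj2_sig l).2 (ex_intro _ a (conj ra da)).
have [b' [rb' db' sb']] := HI_saturated (proj2_sig mu).2 (ex_intro _ b (conj rb db)).
have pa : ~ H (r a') /\ ~ H (s a') by rewrite ra'; split => //; exact: (proj2_sig l).2.
have pb : ~ H (r b') /\ ~ H (s b') by rewrite rb'; split => //; exact: (proj2_sig mu).2.
by split; [exists (exist _ a' pa) | exists (exist _ b' pb)]; split => //; apply: rm_vert_eq.
Qed.
End HereditarySaturated.

(* The cosets of the generators of A form a Kumjian--Pask (Lambda \ H(I))-family
   in A/I: every relation is inherited from Lambda, the terms of (KP4) which
   are dropped having their source in H(I). *)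
Section QuotientFamily.
Variables (k : nat) (G : kgraph_data k).
Hypothesis hG : is_kgraph G.
Variables (R : comPzRingType) (A : nalg R) (F : kpfam G A) (I : A -> Prop).
Hypotheses (hF : is_KP_family F) (hI : is_ideal I).
Local Notation "x * y" := (na_mul A x y) : ring_scope.
Local Notation P := (kP F).
Local Notation S := (kS F).
Local Notation Sg := (kSg F).
Local Notation H := (HI F I).

Definition quotient_family : kpfam (kg_remove H) (Qalg hI) :=
  @KPFam _ (kg_remove H) _ (Qalg hI) (fun v => qclass I (P (proj1_sig v)))
    (fun l => qclass I (S (proj1_sig l))) (fun l => qclass I (Sg (proj1_sig l))).

Lemma quotient_family_KP : is_KP_family quotient_family.
Proof.
split; first by move=> e de; have [/= -> ->] := KP_vertex hF de.
split; first by move=> v; rewrite /= (qmulE hI) (KP_idem hF).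
split.
  move=> v w ne; rewrite /= (qmulE hI) (KP_orth hF) // => e; apply: ne.
  exact: rm_vert_eq.
split.
  move=> l m n dl dm c; have [e1 e2] := KP2_comp hF dl dm c.
  by rewrite /= !(qmulE hI) e1 e2.
split.
  move=> l dl; have [e1 e2 e3 e4] := KP2_proj hF dl.
  by rewrite /= !(qmulE hI) e1 e2 e3 e4.
split.
  move=> n n0 l m /(le_n_remove hG hF hI) hl /(le_n_remove hG hF hI) hm.
  have [e1 e2] := KP3_le hF n0 hl hm.
  split => [e|ne]; rewrite /= (qmulE hI); first by rewrite e1 // e.
  by rewrite e2 // => e; apply: ne; apply: rm_path_eq.
move=> v n n0; have [L [nd hL hP]] := KP4_sum hF (proj1_sig v) n0.
exists (keep F I L); split; [exact: NoDup_keep | exact: (keep_row hG hF hI hL) |].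
rewrite /= hP (additive_sum (alg_homD (qclass_hom hI))).
rewrite -(sum_keep (F := F) (I := I) (g := fun l => qclass I (S l * Sg l) : Qalg hI)).
- by apply: eq_bigr => x _; rewrite (qmulE hI).
- by move=> l /hL [-> _]; exact: (proj2_sig v).
- move=> l Hs; apply: (qclass_ideal hI); apply: (idealMr hI).
  exact: (S_in_ideal hG hF hI Hs).
Qed.
End QuotientFamily.

(* Extending a Kumjian--Pask (Lambda \ H(I))-family by zero on the paths with
   source in H(I) gives a Kumjian--Pask Lambda-family: as H(I) is hereditary
   and saturated, every relation of Lambda either involves only paths avoiding
   H(I) or reduces to 0 = 0. *)
Section ExtensionFamily.
Variables (k : nat) (G : kgraph_data k).
Hypothesis hG : is_kgraph G.
Variables (R : comPzRingType) (A : nalg R) (F : kpfam G A) (I : A -> Prop).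
Hypotheses (hF : is_KP_family F) (hI : is_ideal I).
Local Notation r := (kg_r G).
Local Notation s := (kg_s G).
Local Notation d := (kg_deg G).
Local Notation H := (HI F I).
Variables (B : nalg R) (F' : kpfam (kg_remove H) B).
Hypothesis hF' : is_KP_family F'.
Local Notation "x * y" := (na_mul B x y) : ring_scope.
Local Notation avoids l := (~ H (r l) /\ ~ H (s l)).

Definition ext_P (v : kg_vert G) : B :=
  match pselect (H v) with left _ => 0 | right p => kP F' (exist _ v p) end.
Definition ext_S (l : kg_path G) : B :=
  match pselect (avoids l) with left p => kS F' (exist _ l p) | right _ => 0 end.
Definition ext_Sg (l : kg_path G) : B :=
  match pselect (avoids l) with left p => kSg F' (exist _ l p) | right _ => 0 end.
Definition extension_family : kpfam G B := KPFam ext_P ext_S ext_Sg.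

Lemma ext_P_in v (p : ~ H v) : ext_P v = kP F' (exist _ v p).
Proof.
by rewrite /ext_P; case: pselect => [//|p']; congr (kP F' _); apply: eq_exist.
Qed.

Lemma ext_P_out v : H v -> ext_P v = 0.
Proof. by rewrite /ext_P; case: pselect. Qed.

Lemma ext_S_in l (p : avoids l) : ext_S l = kS F' (exist _ l p).
Proof.
by rewrite /ext_S; case: pselect => [p'|//]; congr (kS F' _); apply: eq_exist.
Qed.

Lemma ext_Sg_in l (p : avoids l) : ext_Sg l = kSg F' (exist _ l p).
Proof.
by rewrite /ext_Sg; case: pselect => [p'|//]; congr (kSg F' _); apply: eq_exist.
Qed.

Lemma ext_S_out l : H (s l) -> ext_S l = 0.
Proof. by move=> Hs; rewrite /ext_S; case: pselect => // -[]. Qed.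

Lemma ext_Sg_out l : H (s l) -> ext_Sg l = 0.
Proof. by move=> Hs; rewrite /ext_Sg; case: pselect => // -[]. Qed.

Lemma ext_P_val (v : kg_vert (kg_remove H)) : ext_P (proj1_sig v) = kP F' v.
Proof. by case: v => v p; exact: ext_P_in. Qed.

Lemma ext_S_val (l : kg_path (kg_remove H)) : ext_S (proj1_sig l) = kS F' l.
Proof. by case: l => l p; exact: ext_S_in. Qed.

Lemma ext_Sg_val (l : kg_path (kg_remove H)) : ext_Sg (proj1_sig l) = kSg F' l.
Proof. by case: l => l p; exact: ext_Sg_in. Qed.

Let avoidsP l : ~ H (s l) -> avoids l := @notHI_source _ _ hG _ _ _ _ hF hI l.

Lemma ext_vertex e : d e = nk0 k -> ext_S e = ext_P (r e) /\ ext_Sg e = ext_P (r e).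
Proof.
move=> de; have [se _ _] := deg0_id hG de.
have [Hs|Hs] := pselect (H (s e)).
  by rewrite ext_S_out // ext_Sg_out // ext_P_out // -se.
have p := avoidsP Hs; rewrite (ext_S_in p) (ext_Sg_in p) (ext_P_in p.1).
have [-> ->] := KP_vertex hF' (e := exist _ e p) de.
by split; congr (kP F' _); apply: rm_vert_eq.
Qed.

Lemma ext_idem v : ext_P v * ext_P v = ext_P v.
Proof.
have [Hv|Hv] := pselect (H v); first by rewrite ext_P_out // nmul0l.
by rewrite (ext_P_in Hv) (KP_idem hF').
Qed.

Lemma ext_orth v w : v <> w -> ext_P v * ext_P w = 0.
Proof.
move=> vw; have [Hv|Hv] := pselect (H v); first by rewrite ext_P_out // nmul0l.
have [Hw|Hw] := pselect (H w); first by rewrite (ext_P_out Hw) nmul0r.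
rewrite (ext_P_in Hv) (ext_P_in Hw) (KP_orth hF') // => e; apply: vw.
exact: (congr1 (@proj1_sig _ _) e).
Qed.

Lemma ext_KP2_comp l m n : d l <> nk0 k -> d m <> nk0 k -> kg_comp G l m n ->
  ext_S l * ext_S m = ext_S n /\ ext_Sg m * ext_Sg l = ext_Sg n.
Proof.
move=> dl dm c; have [slm rn sn] := comp_rs hG c.
have [Hs|Hs] := pselect (H (s n)).
  rewrite (ext_S_out Hs) (ext_Sg_out Hs) (ext_S_out (l := m)) ?(ext_Sg_out (l := m)) -?sn //.
  by rewrite nmul0r nmul0l.
have pn := avoidsP Hs; have pm : avoids m by apply: avoidsP; rewrite -sn.
have pl : avoids l by rewrite -rn slm; split; [exact: pn.1 | exact: pm.1].
rewrite (ext_S_in pl) (ext_S_in pm) (ext_S_in pn) (ext_Sg_in pl) (ext_Sg_in pm) (ext_Sg_in pn).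
exact: (KP2_comp hF' (l := exist _ l pl) (m := exist _ m pm) (n := exist _ n pn)).
Qed.

Lemma ext_KP2_proj l : d l <> nk0 k ->
  [/\ ext_P (r l) * ext_S l = ext_S l, ext_S l * ext_P (s l) = ext_S l,
      ext_P (s l) * ext_Sg l = ext_Sg l & ext_Sg l * ext_P (r l) = ext_Sg l].
Proof.
move=> dl; have [Hs|Hs] := pselect (H (s l)).
  by rewrite (ext_S_out Hs) (ext_Sg_out Hs) (ext_P_out Hs) !nmul0r !nmul0l.
have pl := avoidsP Hs.
rewrite (ext_S_in pl) (ext_Sg_in pl) (ext_P_in pl.1) (ext_P_in pl.2).
exact: (KP2_proj hF' (l := exist _ l pl) dl).
Qed.

Lemma ext_KP3 (n : Nk k) : n <> nk0 k -> forall l m, le_n n l -> le_n n m ->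
  (l = m -> ext_Sg l * ext_S m = ext_P (s l)) /\ (l <> m -> ext_Sg l * ext_S m = 0).
Proof.
move=> n0 l m hl hm.
have [Hs|Hs] := pselect (H (s l)).
  by rewrite (ext_Sg_out Hs) nmul0l ext_P_out.
have [Hsm|Hsm] := pselect (H (s m)).
  by rewrite (ext_S_out Hsm) nmul0r; split => // lm; case: Hs; rewrite lm.
have pl := avoidsP Hs; have pm := avoidsP Hsm.
have [e1 e2] := KP3_le hF' n0 ((le_n_remove hG hF hI n (exist _ l pl)).2 hl)
  ((le_n_remove hG hF hI n (exist _ m pm)).2 hm).
rewrite (ext_Sg_in pl) (ext_S_in pm) (ext_P_in Hs); split => [lm|nlm].
- by subst m; rewrite e1; [congr (kP F' _); apply: rm_vert_eq | apply: rm_path_eq].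
- by rewrite e2 // => e; apply: nlm; exact: (congr1 (@proj1_sig _ _) e).
Qed.

Lemma ext_KP4 v (n : Nk k) : n <> nk0 k ->
  exists sq : seq (kg_path G),
    [/\ List.NoDup sq, (forall l, List.In l sq <-> (r l = v /\ le_n n l)) &
        ext_P v = \sum_(l <- sq) ext_S l * ext_Sg l].
Proof.
move=> n0; have [L [nd hL _]] := KP4_sum hF v n0.
exists L; split => //.
have [Hv|Hv] := pselect (H v).
  rewrite ext_P_out // (eq_big_In (F2 := fun _ => 0)) ?big1 // => l /hL [rl _].
  by rewrite ext_S_out ?nmul0l //; apply: (HI_hereditary hG hF hI); rewrite rl.
rewrite (ext_P_in Hv); have [L' [nd' hL' ->]] := KP4_sum hF' (exist _ v Hv) n0.
have perm : Permutation (keep F I L) L'.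
  apply: NoDup_Permutation; [exact: NoDup_keep | exact: nd' | move=> x].
  by rewrite (keep_row hG hF hI (v := exist _ v Hv) hL) hL'.
rewrite -(Permutation_sum (fun x => kS F' x * kSg F' x) perm) -(sum_keep (F := F) (I := I)
  (g := fun l => ext_S l * ext_Sg l)).
- by apply: eq_bigr => -[x px] _; rewrite (ext_S_in px) (ext_Sg_in px).
- by move=> l /hL [-> _].
- by move=> l Hs; rewrite ext_S_out ?nmul0l.
Qed.

Lemma extension_family_KP : is_KP_family extension_family.
Proof.
split; first exact: ext_vertex.
split; first exact: ext_idem.
split; first exact: ext_orth.
split; first exact: ext_KP2_comp.
split; first exact: ext_KP2_proj.
split; first exact: ext_KP3.
exact: ext_KP4.
Qed.
End ExtensionFamily.

Section Isomorphism.
Variables (k : nat) (G : kgraph_data k).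
Hypothesis hG : is_kgraph G.
Variables (R : comPzRingType) (A : nalg R) (F : kpfam G A) (I : A -> Prop).
Hypotheses (hUF : is_universal_KP F) (hI : is_ideal I).
Hypotheses (hb : basic_ideal F I) (hg : graded_ideal F I).
Local Notation H := (HI F I).
Variables (B : nalg R) (F' : kpfam (kg_remove H) B).
Hypothesis hUF' : is_universal_KP F'.
Variables (theta : B -> Qalg hI) (phi : A -> B).
Hypotheses (htheta : is_alg_hom theta) (hphi : is_alg_hom phi).
Hypotheses
  (thetaP : forall v, theta (kP F' v) = qclass I (kP F (proj1_sig v)))
  (thetaS : forall l, theta (kS F' l) = qclass I (kS F (proj1_sig l)))
  (thetaSg : forall l, theta (kSg F' l) = qclass I (kSg F (proj1_sig l))).
Hypotheses
  (phiP : forall v, phi (kP F v) = ext_P F' v)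
  (phiS : forall l, phi (kS F l) = ext_S F' l)
  (phiSg : forall l, phi (kSg F l) = ext_Sg F' l).
Let hF : is_KP_family F := hUF.1.

(* phi kills every s_a s_{b^*} with s(b) in H(I), hence all of I. *)
Lemma phi_ideal a : I a -> phi a = 0.
Proof.
move=> Ia; apply: (kill_graded_ideal hG hF hI hb (alg_homD hphi) (alg_homZ hphi) _ hg Ia).
move=> x y _ Hs.
by rewrite (alg_homM hphi) phiSg ext_Sg_out ?nmul0r.
Qed.

Local Notation psi := (qlift (hI := hI) phi).
Let psi_qclass := qlift_qclass hI hphi phi_ideal.

Lemma psi_theta x : psi (theta x) = x.
Proof.
have hpsi := qlift_hom hI hphi phi_ideal.
apply: (universal_ext hUF' (alg_hom_comp htheta hpsi) (g2 := id)) => // [v|l|l].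
- by rewrite thetaP psi_qclass phiP ext_P_val.
- by rewrite thetaS psi_qclass phiS ext_S_val.
- by rewrite thetaSg psi_qclass phiSg ext_Sg_val.
Qed.

Lemma theta_psi X : theta (psi X) = X.
Proof.
have theta0 := additive0 (alg_homD htheta).
elim/quot_ind: X => a; rewrite psi_qclass.
apply: (universal_ext hUF (alg_hom_comp hphi htheta) (qclass_hom hI)) => [v|l|l].
- rewrite phiP; have [Hv|Hv] := pselect (H v).
    by rewrite ext_P_out // theta0 qclass_ideal.
  by rewrite (ext_P_in F' Hv) thetaP.
- rewrite phiS; have [Hs|Hs] := pselect (H (kg_s G l)).
    by rewrite ext_S_out // theta0 qclass_ideal //; exact: (S_in_ideal hG hF hI Hs).
  by rewrite (ext_S_in F' (notHI_source hG hF hI Hs)) thetaS.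
- rewrite phiSg; have [Hs|Hs] := pselect (H (kg_s G l)).
    by rewrite ext_Sg_out // theta0 qclass_ideal //; exact: (Sg_in_ideal hG hF hI Hs).
  by rewrite (ext_Sg_in F' (notHI_source hG hF hI Hs)) thetaSg.
Qed.
End Isomorphism.

Unset Implicit Arguments.

Theorem mainTheorem1 (k : nat) (G : kgraph_data k) (R : comPzRingType)
  (A : nalg R) (F : kpfam G A) (I : A -> Prop)
  (B : nalg R) (F' : kpfam (kg_remove (HI F I)) B) :
  is_kgraph G -> row_finite G -> locally_convex G ->
  is_universal_KP F ->
  is_ideal I -> basic_ideal F I -> graded_ideal F I ->
  is_universal_KP F' ->
  [/\ is_kgraph (kg_remove (HI F I)),
      row_finite (kg_remove (HI F I)),
      locally_convex (kg_remove (HI F I)) &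
      exists pi : B -> quot I,
        [/\ is_quot_iso pi,
            (forall v, pi (kP F' v) = qclass I (kP F (proj1_sig v))),
            (forall l, kg_deg _ l <> nk0 k ->
               pi (kS F' l) = qclass I (kS F (proj1_sig l))) &
            (forall l, kg_deg _ l <> nk0 k ->
               pi (kSg F' l) = qclass I (kSg F (proj1_sig l)))]].
Proof.
move=> hG rf lc hUF hI hb hg hUF'; have [hF hU] := hUF; have [hF' hU'] := hUF'.
split; [exact: (remove_kgraph hG hF hI) | exact: remove_row_finite |
        exact: (remove_locally_convex hG hF hI lc) |].
have [theta [htheta thetaP thetaS thetaSg _]] :=
  hU' _ _ (quotient_family_KP hG hF hI).
have [phi [hphi phiP phiS phiSg _]] := hU _ _ (extension_family_KP hG hF hI hF').
have psi_theta := psi_theta hG hUF hb hg hUF' htheta hphi thetaP thetaS thetaSg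
  phiP phiS phiSg.
have theta_psi := theta_psi hG hUF hb hg htheta hphi thetaP thetaS thetaSg
  phiP phiS phiSg.
exists theta; split => //; split; first exact: alg_hom_quot_hom.
- exact: can_inj psi_theta.
- by move=> X; exists (qlift (hI := hI) phi X); exact: theta_psi.
Qed.
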